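(* Let $Q$ be a quantale, $M$ a $Q$-module, $\mathcal{B}\in\operatorname{mF}(Q)$ binormal over $M$ and $\mathcal{F}\in\operatorname{mF}(Q)$ 1-step over $M$. Then $\mathcal{B}+\mathcal{F}$ is 1-step over $M$.
   Context: A quantale is a poset $Q$ with all nonempty joins $\sum$ (no bottom required), top $1$, commutative associative multiplication with unit $1$ distributing over nonempty joins; a $Q$-module is a poset $M$ with all nonempty joins and an associative unital action distributing over nonempty joins in each variable. An m-filter is a subset of $Q$ containing $1$, upward closed and closed under multiplication; $\mathcal{B}+\mathcal{F}$ is the smallest m-filter containing $\mathcal{B}\cup\mathcal{F}$. Write $x\le^*\sum_ix_i$ if $x\le\sum_{i\in I_0}x_i$ for some finite nonempty $I_0$. For $a,b\in M$: $a\preceq^1_\mathcal{F}b$ means there are families $(a_i)$ in $M$, $(s_i)$ in $\mathcal{F}$ with $a\le\sum a_i$ and $s_ia_i\le b$; $a\preceq^n_\mathcal{F}b$ means a chain of $n$ such steps; $a\preceq_\mathcal{F}b$ means $a\preceq^n_\mathcal{F}b$ for some $n\ge1$. $\mathcal{F}$ is localizable over $M$ if for each $b$ there is $n_b$ with $a\preceq_\mathcal{F}b\Rightarrow a\preceq^{n_b}_\mathcal{F}b$; 1-step over $M$ if localizable and $a\preceq_\mathcal{F}b\Rightarrow a\preceq^1_\mathcal{F}b$. $\mathcal{N}$ is normal over $M$ if for all $s\in\mathcal{N}$, $m\in M$, families $(m_i)$ with $sm\le\sum_im_i$, there exist families $(m'_j)$ in $M$, $(s_j)$ in $\mathcal{N}$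 with $m\le\sum_jm'_j$ and $s_jm'_j\le^*\sum_im_i$. $\mathcal{C}$ is conormal over $M$ if for all $m,n\in M$ with $m\preceq^1_\mathcal{C}n$ there is $s\in\mathcal{C}$ with $sm\le n$. $\mathcal{B}$ is binormal over $M$ if it is both normal and conormal over $M$. *)

From Stdlib Require Import List.
Set Implicit Arguments.

(* A quantale: poset with all nonempty joins (given as a join operator on
   subsets, only constrained on nonempty subsets), top element 1 which is
   the unit of a commutative associative multiplication distributing over
   nonempty joins. *)
Record Quantale := {
  qcar :> Type;
  qle : qcar -> qcar -> Prop;
  qle_refl : forall x, qle x x;
  qle_antisym : forall x y, qle x y -> qle y x -> x = y;
  qle_trans : forall x y z, qle x y -> qle y z -> qle x z;
  qsup : (qcar -> Prop) -> qcar;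
  qsup_ub : forall (S : qcar -> Prop) x, S x -> qle x (qsup S);
  qsup_least : forall (S : qcar -> Prop) y, (exists x, S x) ->
      (forall x, S x -> qle x y) -> qle (qsup S) y;
  qone : qcar;
  qone_top : forall x, qle x qone;
  qmul : qcar -> qcar -> qcar;
  qmul_comm : forall x y, qmul x y = qmul y x;
  qmul_assoc : forall x y z, qmul x (qmul y z) = qmul (qmul x y) z;
  qmul_1l : forall x, qmul qone x = x;
  qmul_sup : forall a (S : qcar -> Prop), (exists x, S x) ->
      qmul a (qsup S) = qsup (fun y => exists x, S x /\ y = qmul a x)
}.

Record QModule (Q : Quantale) := {
  mcar :> Type;
  mle : mcar -> mcar -> Prop;
  mle_refl : forall x, mle x x;
  mle_antisym : forall x y, mle x y -> mle y x -> x = y;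
  mle_trans : forall x y z, mle x y -> mle y z -> mle x z;
  msup : (mcar -> Prop) -> mcar;
  msup_ub : forall (S : mcar -> Prop) x, S x -> mle x (msup S);
  msup_least : forall (S : mcar -> Prop) y, (exists x, S x) ->
      (forall x, S x -> mle x y) -> mle (msup S) y;
  act : qcar Q -> mcar -> mcar;
  act_assoc : forall s t m, act (qmul Q s t) m = act s (act t m);
  act_1 : forall m, act (qone Q) m = m;
  act_supl : forall (S : qcar Q -> Prop) m, (exists x, S x) ->
      act (qsup Q S) m = msup (fun y => exists s, S s /\ y = act s m);
  act_supr : forall s (T : mcar -> Prop), (exists x, T x) ->
      act s (msup T) = msup (fun y => exists t, T t /\ y = act s t)
}.

Section Defs.
Variable Q : Quantale.

Definition is_mfilter (F : Q -> Prop) : Prop :=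
  F (qone Q) /\
  (forall x y, F x -> qle Q x y -> F y) /\
  (forall x y, F x -> F y -> F (qmul Q x y)).

Definition mfilter_sum (B F : Q -> Prop) : Q -> Prop :=
  fun x => forall G, is_mfilter G -> (forall y, B y \/ F y -> G y) -> G x.

Variable M : QModule Q.

Definition famsup (I : Type) (m : I -> M) : M :=
  msup M (fun y => exists i, m i = y).

Definition le_star (x : M) (I : Type) (m : I -> M) : Prop :=
  exists l : list I, l <> nil /\
    mle M x (msup M (fun y => exists i, In i l /\ m i = y)).

Definition prec1 (F : Q -> Prop) (a b : M) : Prop :=
  exists (I : Type) (ai : I -> M) (si : I -> Q),
    inhabited I /\ mle M a (famsup ai) /\
    (forall i, F (si i)) /\ (forall i, mle M (act M (si i) (ai i)) b).

Fixpoint precn (F : Q -> Prop) (n : nat) (a b : M) : Prop :=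
  match n with
  | O => a = b
  | S k => exists c, prec1 F a c /\ precn F k c b
  end.

Definition prec (F : Q -> Prop) (a b : M) : Prop :=
  exists n, 1 <= n /\ precn F n a b.

Definition localizable (F : Q -> Prop) : Prop :=
  forall b : M, exists nb, 1 <= nb /\ forall a, prec F a b -> precn F nb a b.

Definition one_step (F : Q -> Prop) : Prop :=
  localizable F /\ forall a b, prec F a b -> prec1 F a b.

Definition normal (N : Q -> Prop) : Prop :=
  forall (s : Q) (m : M) (I : Type) (mi : I -> M),
    inhabited I -> N s -> mle M (act M s m) (famsup mi) ->
    exists (J : Type) (m' : J -> M) (sj : J -> Q),
      inhabited J /\ mle M m (famsup m') /\
      (forall j, N (sj j)) /\ (forall j, le_star (act M (sj j) (m' j)) mi).

Definition conormal (C : Q -> Prop) : Prop :=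
  forall m n : M, prec1 C m n -> exists s, C s /\ mle M (act M s m) n.

Definition binormal (B : Q -> Prop) : Prop := normal B /\ conormal B.

End Defs.

(* Since B + F consists of the elements above some product b f, every
   (B+F)-step splits into an F-step followed by a B-step.  Normality and
   conormality of B let a B-step be pushed past an F-step, and conormal
   B-steps compose, so an n-chain of (B+F)-steps rearranges into n F-steps
   followed by a single B-step.  The F-chain collapses to one F-step because
   F is 1-step, and conormality merges the final B-step into it. *)

From Stdlib Require Import List ClassicalEpsilon.

Arguments is_mfilter {Q} F.
Arguments mfilter_sum {Q} B F _.

Section QuantaleFacts.
Variable Q : Quantale.

Lemma qsup_pair (x y : Q) : qle Q x y -> qsup Q (fun z => z = x \/ z = y) = y.
Proof.
  intros Hxy. apply qle_antisym.
  - apply qsup_least; [exists y; auto|].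
    intros z [-> | ->]; [exact Hxy | apply qle_refl].
  - apply qsup_ub. auto.
Qed.

Lemma qmul_mono_r (x y z : Q) : qle Q y z -> qle Q (qmul Q x y) (qmul Q x z).
Proof.
  intros Hyz. rewrite <- (qsup_pair y z Hyz), qmul_sup by (exists z; auto).
  apply qsup_ub. exists y. auto.
Qed.

Lemma qmul_mono (x y z t : Q) :
  qle Q x y -> qle Q z t -> qle Q (qmul Q x z) (qmul Q y t).
Proof.
  intros Hxy Hzt. apply qle_trans with (qmul Q x t).
  - apply qmul_mono_r, Hzt.
  - rewrite (qmul_comm Q x), (qmul_comm Q y). apply qmul_mono_r, Hxy.
Qed.

Lemma qmul_le_l (x y : Q) : qle Q (qmul Q x y) x.
Proof.
  apply qle_trans with (qmul Q x (qone Q)); [apply qmul_mono_r, qone_top|].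
  rewrite qmul_comm, qmul_1l. apply qle_refl.
Qed.

Lemma qmul_le_r (x y : Q) : qle Q (qmul Q x y) y.
Proof. rewrite qmul_comm. apply qmul_le_l. Qed.

Lemma mfilter_sum_iff (B F : Q -> Prop) x :
  is_mfilter B -> is_mfilter F ->
  mfilter_sum B F x <-> exists b f, B b /\ F f /\ qle Q (qmul Q b f) x.
Proof.
  intros [B1 [Bup Bmul]] [F1 [Fup Fmul]]. split.
  - intros Hx. apply Hx.
    + split; [|split].
      * exists (qone Q), (qone Q). repeat split; auto. apply qone_top.
      * intros u v [b [f [Hb [Hf Hu]]]] Huv.
        exists b, f. repeat split; auto. eapply qle_trans; eauto.
      * intros u v [b [f [Hb [Hf Hu]]]] [b' [f' [Hb' [Hf' Hv]]]].
        exists (qmul Q b b'), (qmul Q f f'). repeat split; auto.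
        replace (qmul Q (qmul Q b b') (qmul Q f f'))
          with (qmul Q (qmul Q b f) (qmul Q b' f')) by
          (rewrite <- !qmul_assoc; f_equal; rewrite !qmul_assoc;
           f_equal; apply qmul_comm).
        apply qmul_mono; assumption.
    + intros y [Hy | Hy].
      * exists y, (qone Q). repeat split; auto. apply qmul_le_l.
      * exists (qone Q), y. repeat split; auto. apply qmul_le_r.
  - intros [b [f [Hb [Hf Hbf]]]] G [_ [Gup Gmul]] HBF.
    apply Gup with (qmul Q b f); auto.
Qed.

Fixpoint qprod {I : Type} (f : I -> Q) (l : list I) : Q :=
  match l with nil => qone Q | i :: l => qmul Q (f i) (qprod f l) end.

Lemma mfilter_qprod {I : Type} (F : Q -> Prop) (f : I -> Q) l :
  is_mfilter F -> (forall i, F (f i)) -> F (qprod f l).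
Proof. intros [F1 [_ Fmul]] Hf. induction l; simpl; auto. Qed.

Lemma qprod_le {I : Type} (f : I -> Q) l i : In i l -> qle Q (qprod f l) (f i).
Proof.
  induction l as [|j l IH]; simpl; [tauto|]. intros [-> | Hi].
  - apply qmul_le_l.
  - eapply qle_trans; [apply qmul_le_r | auto].
Qed.

End QuantaleFacts.

Section ModuleFacts.
Context {Q : Quantale} (M : QModule Q).

Lemma msup_pair (m n : M) : mle M m n -> msup M (fun z => z = m \/ z = n) = n.
Proof.
  intros Hmn. apply mle_antisym.
  - apply msup_least; [exists n; auto|].
    intros z [-> | ->]; [exact Hmn | apply mle_refl].
  - apply msup_ub. auto.
Qed.

Lemma act_mono_r s (m n : M) : mle M m n -> mle M (act M s m) (act M s n).
Proof.
  intros Hmn. rewrite <- (msup_pair m n Hmn), act_supr by (exists n; auto).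
  apply msup_ub. exists m. auto.
Qed.

Lemma act_mono_l s t (m : M) : qle Q s t -> mle M (act M s m) (act M t m).
Proof.
  intros Hst. rewrite <- (qsup_pair Q s t Hst), act_supl by (exists t; auto).
  apply msup_ub. exists s. auto.
Qed.

Lemma le_famsup {I : Type} (m : I -> M) i : mle M (m i) (famsup M m).
Proof. apply msup_ub. exists i. reflexivity. Qed.

(* The product of the f i lies below each f i, so it acts uniformly on the finite join. *)
Lemma act_qprod_le_finite_join I (f : I -> Q) (c : I -> M) (l : list I) m d :
  l <> nil -> (forall i, mle M (act M (f i) (c i)) d) ->
  mle M m (msup M (fun z => exists i, In i l /\ c i = z)) ->
  mle M (act M (qprod Q f l) m) d.
Proof.
  intros Hl Hfc Hm.
  assert (Hne : exists z, exists i, In i l /\ c i = z).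
  { destruct l as [|i l]; [congruence|]. exists (c i), i. simpl. auto. }
  eapply mle_trans; [apply act_mono_r, Hm|].
  rewrite act_supr by exact Hne.
  apply msup_least.
  - destruct Hne as [z Hz]. exists (act M (qprod Q f l) z), z. auto.
  - intros w [t [[i [Hi <-]] ->]].
    eapply mle_trans; [apply act_mono_l, qprod_le, Hi | apply Hfc].
Qed.

Lemma prec1_refl (F : Q -> Prop) a : is_mfilter F -> prec1 M F a a.
Proof.
  intros [F1 _]. exists unit, (fun _ => a), (fun _ => qone Q).
  split; [exact (inhabits tt) | repeat split; auto].
  - exact (le_famsup (fun _ : unit => a) tt).
  - intros _. rewrite act_1. apply mle_refl.
Qed.

Lemma prec1_act_le (F G : Q -> Prop) s a c b :
  (forall f, F f -> G (qmul Q s f)) ->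
  prec1 M F a c -> mle M (act M s c) b -> prec1 M G a b.
Proof.
  intros HFG [I [ai [si [inh [Ha [Hsi Hle]]]]]] Hc.
  exists I, ai, (fun i => qmul Q s (si i)). split; [exact inh | repeat split; auto].
  intros i. rewrite act_assoc. eapply mle_trans; [apply act_mono_r, Hle | exact Hc].
Qed.

Lemma prec1_trans (C : Q -> Prop) a c b :
  is_mfilter C -> conormal M C -> prec1 M C a c -> prec1 M C c b -> prec1 M C a b.
Proof.
  intros [_ [_ Cmul]] HC Hac Hcb. destruct (HC _ _ Hcb) as [s [Cs Hs]].
  apply prec1_act_le with C s c; auto.
Qed.

Lemma prec1_sum_of_steps (B F : Q -> Prop) a c b :
  is_mfilter B -> is_mfilter F -> conormal M B ->
  prec1 M F a c -> prec1 M B c b -> prec1 M (mfilter_sum B F) a b.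
Proof.
  intros HB HF HBc Hac Hcb. destruct (HBc _ _ Hcb) as [s [Bs Hs]].
  apply prec1_act_le with F s c; auto.
  intros f Hf. apply mfilter_sum_iff; auto. exists s, f. repeat split; auto.
  apply qle_refl.
Qed.

Lemma prec1_factor (F B : Q -> Prop) J (m : J -> M) (f s : J -> Q) a b :
  inhabited J -> mle M a (famsup M m) ->
  (forall j, F (f j)) -> (forall j, B (s j)) ->
  (forall j, mle M (act M (s j) (act M (f j) (m j))) b) ->
  exists e, prec1 M F a e /\ prec1 M B e b.
Proof.
  intros inh Ha Hf Hs Hle. exists (famsup M (fun j => act M (f j) (m j))). split.
  - exists J, m, f. split; [exact inh | repeat split; auto].
    intros j. exact (le_famsup (fun j => act M (f j) (m j)) j).
  - exists J, (fun j => act M (f j) (m j)), s. split; [exact inh | repeat split; auto].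
    apply mle_refl.
Qed.

Lemma prec1_sum_split (B F : Q -> Prop) a b :
  is_mfilter B -> is_mfilter F ->
  prec1 M (mfilter_sum B F) a b -> exists c, prec1 M F a c /\ prec1 M B c b.
Proof.
  intros HB HF [I [ai [si [inh [Ha [Hsi Hle]]]]]].
  destruct (choice (fun i (p : Q * Q) =>
              B (fst p) /\ F (snd p) /\ qle Q (qmul Q (fst p) (snd p)) (si i)))
    as [p Hp].
  { intros i. destruct (proj1 (mfilter_sum_iff Q B F _ HB HF) (Hsi i))
      as [b0 [f0 H]]. exists (b0, f0). exact H. }
  apply prec1_factor with I ai (fun i => snd (p i)) (fun i => fst (p i));
    try (intros i; apply Hp); auto.
  intros i. rewrite <- act_assoc.
  eapply mle_trans; [apply act_mono_l, Hp | apply Hle].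
Qed.

Lemma prec1_swap (B F : Q -> Prop) y x d :
  is_mfilter F -> binormal M B ->
  prec1 M B y x -> prec1 M F x d -> exists e, prec1 M F y e /\ prec1 M B e d.
Proof.
  intros HF [HBn HBc] Hyx [I [ci [fi [inh [Hx [Hfi Hle]]]]]].
  destruct (HBc _ _ Hyx) as [s [Bs Hs]].
  destruct (HBn s y I ci inh Bs (mle_trans _ _ _ _ Hs Hx))
    as [J [m [sj [inhJ [Hy [Hsj Hstar]]]]]].
  destruct (choice (fun j l => l <> nil /\
              mle M (act M (sj j) (m j))
                (msup M (fun z => exists i, In i l /\ ci i = z))))
    as [l Hl]; [exact Hstar|].
  apply prec1_factor with J m (fun j => qprod Q fi (l j)) sj; auto.
  - intros j. apply mfilter_qprod; auto.
  - intros j. rewrite <- act_assoc, qmul_comm, act_assoc.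
    apply act_qprod_le_finite_join with ci; apply Hl || apply Hle.
Qed.

Lemma precn_swap (B F : Q -> Prop) n y x c :
  is_mfilter F -> binormal M B ->
  prec1 M B y x -> precn M F n x c -> exists z, precn M F n y z /\ prec1 M B z c.
Proof.
  intros HF HB. revert y x. induction n as [|n IH]; intros y x Hyx Hxc; simpl in *.
  - subst. exists y. auto.
  - destruct Hxc as [x1 [Hxx1 Hx1c]].
    destruct (prec1_swap B F y x x1 HF HB Hyx Hxx1) as [w [Hyw Hwx1]].
    destruct (IH w x1 Hwx1 Hx1c) as [z [Hwz Hzc]].
    exists z. split; [exists w|]; auto.
Qed.

Lemma precn_sum_factor (B F : Q -> Prop) n a b :
  is_mfilter B -> is_mfilter F -> binormal M B ->
  precn M (mfilter_sum B F) n a b -> exists c, precn M F n a c /\ prec1 M B c b.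
Proof.
  intros HB HF HBn. revert a. induction n as [|n IH]; intros a Hab; simpl in *.
  - subst. exists b. split; auto. apply prec1_refl, HB.
  - destruct Hab as [x [Hax Hxb]].
    destruct (IH x Hxb) as [c [Hxc Hcb]].
    destruct (prec1_sum_split B F a x HB HF Hax) as [y [Hay Hyx]].
    destruct (precn_swap B F n y x c HF HBn Hyx Hxc) as [z [Hyz Hzc]].
    exists z. split; [exists y; auto|].
    apply prec1_trans with c; auto. apply HBn.
Qed.

Lemma one_step_of_prec1 (G : Q -> Prop) :
  (forall a b, prec M G a b -> prec1 M G a b) -> one_step M G.
Proof.
  intros HG. split; auto.
  intros b. exists 1. split; auto.
  intros a Hab. exists b. split; [apply HG, Hab | reflexivity].
Qed.

End ModuleFacts.

Theorem mainTheorem14 (Q : Quantale) (M : QModule Q) (B F : Q -> Prop) :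
  @is_mfilter Q B -> @is_mfilter Q F ->
  @binormal Q M B -> @one_step Q M F ->
  @one_step Q M (@mfilter_sum Q B F).
Proof.
  intros HB HF HBn [_ HF1]. apply one_step_of_prec1.
  intros a b [n [Hn Hab]].
  destruct (precn_sum_factor M B F n a b HB HF HBn Hab) as [c [Hac Hcb]].
  apply prec1_sum_of_steps with c; auto.
  - apply HBn.
  - apply HF1. exists n. auto.
Qed.
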